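(* On $\ell^2(\mathbb{N}_0)$ (indices starting at $0$) let $\mathbf{L}_1$ be the symmetric tridiagonal infinite matrix with zero diagonal and $[\mathbf{L}_1]_{m,m+1}=[\mathbf{L}_1]_{m+1,m}=\sqrt{m+1}$ for $m\ge0$, and let $\mathbf{L}_3=\operatorname{diag}(0,-1,0,-1,-1,-1,\dots)$. For $k\in\mathbb{Z}\setminus\{0\}$ set $\mathbf{C}_k=ik\mathbf{L}_1-\mathbf{L}_3$ and let $\mathbf{P}_k$ be the infinite matrix equal to the identity except that its upper-left $4\times4$ block is $$\begin{pmatrix}1&-i\alpha/k&0&0\\ i\alpha/k&1&0&0\\0&0&1&-i\beta/2k\\0&0&i\beta/2k&1\end{pmatrix}.$$ With $\alpha=\beta=1/3$ for all $k$, one has, for all $k\in\mathbb{Z}\setminus\{0\}$, $$\mathbf{C}_k^*\mathbf{P}_k+\mathbf{P}_k\mathbf{C}_k\ \ge\ 2\mu\,\mathbf{P}_k,\qquad\mu=0.0206,$$ in the sense of quadratic forms, i.e. $\langle \mathbf{C}_ku,\mathbf{P}_ku\rangle+\langle\mathbf{P}_ku,\mathbf{C}_ku\rangle\ge2\mu\langle u,\mathbf{P}_ku\rangle$ for all finitely supported $u\in\ell^2(\mathbb{N}_0)$.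
   Context: $\langle\cdot,\cdot\rangle$ is the standard (sesquilinear) inner product on $\ell^2(\mathbb{N}_0)$ and $\mathbf{C}_k^*$ the Hermitian adjoint. *)

From HB Require Import structures.
From mathcomp Require Import all_boot all_order all_algebra.
From mathcomp Require Import complex.
Set Implicit Arguments. Unset Strict Implicit. Unset Printing Implicit Defensive.
Import Order.TTheory GRing.Theory Num.Theory.
Local Open Scope ring_scope.
Local Open Scope complex_scope.

(* Infinite matrices on l^2(N_0) are represented by their entries
   A m n (row m, column n, indices from 0); vectors by u : nat -> C. *)

Section Defs.
Variable R : rcfType.
Local Notation C := R[i].

Definition L1 (m n : nat) : C :=
  if n == m.+1 then (Num.sqrt (m.+1)%:R)%:C
  else if m == n.+1 then (Num.sqrt (n.+1)%:R)%:C
  else 0.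

Definition L3 (m n : nat) : C :=
  if m == n then (if (m == 0)%N || (m == 2)%N then 0 else -1) else 0.

Definition Cmat (k : int) (m n : nat) : C :=
  'i * k%:~R * L1 m n - L3 m n.

Definition Pmat (alpha beta : C) (k : int) (m n : nat) : C :=
  if (m == 0)%N && (n == 1)%N then - 'i * alpha / k%:~R
  else if (m == 1)%N && (n == 0)%N then 'i * alpha / k%:~R
  else if (m == 2)%N && (n == 3)%N then - 'i * beta / (2 * k%:~R)
  else if (m == 3)%N && (n == 2)%N then 'i * beta / (2 * k%:~R)
  else if m == n then 1 else 0.

(* action of an infinite matrix on a vector supported in [0, N) *)
Definition mapply (N : nat) (A : nat -> nat -> C) (u : nat -> C) : nat -> C :=
  fun m => \sum_(j < N) A m j * u j.

(* <a, b> = sum_m a_m * conj(b_m), truncated to indices < M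
   (exact whenever a or b is supported in [0, M)) *)
Definition inner (M : nat) (a b : nat -> C) : C :=
  \sum_(m < M) a m * (b m)^*.

End Defs.

Arguments L1 {R}.
Arguments L3 {R}.
Arguments Cmat {R}.
Arguments Pmat {R}.

From HB Require Import structures.
From mathcomp Require Import all_boot all_order all_algebra.
From mathcomp Require Import complex.
From mathcomp Require Import ring lra zify.
Set Implicit Arguments. Unset Strict Implicit. Unset Printing Implicit Defensive.
Import Order.TTheory GRing.Theory Num.Theory.
Local Open Scope ring_scope.
Local Open Scope complex_scope.

(* Write P_k = I + A with A supported on the upper-left 4x4 corner.  Since
   i k L_1 is skew-adjoint, 2 Re <C_k u, u> = -2 <L_3 u, u>, which is
   diagonal; the cross terms 2 Re <C_k u, A u> - 2 mu <u, A u> only involve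
   u_0, ..., u_4.  Hence the form to be bounded is a Hermitian form in
   u_0, ..., u_4 plus the diagonal tail (2 - 2 mu) |u_m|^2, m >= 5.  For
   |k| >= 1 the 5x5 form splits into positive semidefinite 2x2 blocks and a
   nonnegative diagonal. *)

Section InfiniteMatrices.
Variable R : rcfType.
Local Notation C := R[i].
Implicit Types (A : nat -> nat -> C).

Lemma sum_ord_widen0 n n' (F : nat -> C) : (n <= n')%N ->
  (forall j, (n <= j)%N -> F j = 0) -> \sum_(j < n') F j = \sum_(j < n) F j.
Proof.
move=> le_nn' F0; rewrite (big_ord_widen n' F le_nn') [RHS]big_mkcond.
by apply: eq_bigr => j _; case: ltnP => // /F0 ->.
Qed.

Lemma conjcE (x : C) : Num.conj x = x^*. Proof. by []. Qed.

Variables (N : nat) (u : nat -> C).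
Hypothesis u_supp : forall j, (N <= j)%N -> u j = 0.

Lemma mapply_band A m n : (forall j, (n <= j)%N -> A m j = 0) ->
  mapply N A u m = \sum_(j < n) A m j * u j.
Proof.
move=> A0; rewrite /mapply -(@sum_ord_widen0 N (N + n) (fun j => A m j * u j)).
- rewrite (@sum_ord_widen0 n (N + n) (fun j => A m j * u j)) ?leq_addl //.
  by move=> j /A0 ->; rewrite mul0r.
- exact: leq_addr.
- by move=> j /u_supp ->; rewrite mulr0.
Qed.

Lemma mapply_diag A m : (forall j, j != m -> A m j = 0) ->
  mapply N A u m = A m m * u m.
Proof.
move=> A0; rewrite (@mapply_band _ _ m.+1) => [|j lt_mj]; last first.
  by rewrite A0 // gtn_eqF.
rewrite big_ord_recr /= big1 ?add0r // => j _.
by rewrite A0 ?mul0r // ltn_eqF.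
Qed.

Definition L1row (m : nat) : C :=
  (Num.sqrt m%:R)%:C * u m.-1 + (Num.sqrt m.+1%:R)%:C * u m.+1.

Lemma mapply_L1 m : mapply N L1 u m = L1row m.
Proof.
rewrite (@mapply_band _ _ m.+2) => [|j le_m2j]; last first.
  by rewrite /L1 !ifF //; apply/negbTE; lia.
rewrite !big_ord_recr /= {2 3}/L1 eqxx (ltn_eqF (ltnSn m)) mul0r addr0 /L1row.
case: m => [|m]; first by rewrite big_ord0 sqrtr0 mul0r !add0r.
rewrite big_ord_recr /= big1 => [|j _]; last first.
  by move: (ltn_ord j) => ltjm; rewrite /L1 !ifF ?mul0r //; apply/negbTE; lia.
by rewrite /L1 eqxx ifF ?add0r //; apply/negbTE; lia.
Qed.

Lemma inner_supp_l M (a : nat -> C) : (N <= M)%N -> inner M u a = inner N u a.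
Proof.
move=> leNM; rewrite /inner (@sum_ord_widen0 N M (fun m => u m * (a m)^*)) //.
by move=> m /u_supp ->; rewrite mul0r.
Qed.

Lemma inner_supp_r M (a : nat -> C) : (N <= M)%N -> inner M a u = inner N a u.
Proof.
move=> leNM; rewrite /inner (@sum_ord_widen0 N M (fun m => a m * (u m)^*)) //.
by move=> m /u_supp ->; rewrite rmorph0 mulr0.
Qed.

Definition hermitian A := forall m n, A n m = (A m n)^*.

Lemma inner_mapply_hermitian M H : hermitian H -> (N <= M)%N ->
  inner M (mapply N H u) u = inner M u (mapply N H u).
Proof.
move=> hH leNM; rewrite inner_supp_l // inner_supp_r // /inner /mapply.
under eq_bigr do rewrite mulr_suml.
under [RHS]eq_bigr do rewrite rmorph_sum mulr_sumr.
rewrite exchange_big; apply: eq_bigr => m _; apply: eq_bigr => j _ /=.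
by rewrite rmorphM /= (hH m j); ring.
Qed.

Lemma inner_skew_hermitian M (w : C) H (d c : nat -> C) :
  w^* = - w -> hermitian H -> (forall m, (d m)^* = d m) -> (N <= M)%N ->
  (forall m, c m = w * mapply N H u m - d m * u m) ->
  inner M c u + inner M u c = \sum_(m < M) (- 2 * d m) * (u m * (u m)^*).
Proof.
move=> wJ hH dJ leNM cE.
transitivity (w * (inner M (mapply N H u) u - inner M u (mapply N H u)) +
    \sum_(m < M) (- 2 * d m) * (u m * (u m)^*)); last first.
  by rewrite inner_mapply_hermitian // subrr mulr0 add0r.
rewrite /inner mulrBr !mulr_sumr -sumrB -!big_split; apply: eq_bigr => m _ /=.
by rewrite cE rmorphB !rmorphM /= !conjcE wJ dJ; ring.
Qed.

Lemma L1_hermitian : hermitian L1.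
Proof.
move=> m n; have -> : (L1 m n)^* = L1 m n :> C.
  by rewrite /L1; case: ifP => _; [|case: ifP => _]; rewrite ?conjc_real ?rmorph0.
rewrite /L1; case: (eqVneq m n.+1) => [->|_].
  by rewrite ifF ?eqxx //; apply/negbTE; lia.
by case: eqVneq.
Qed.

Lemma L3_real m : (L3 m m)^* = L3 m m :> C.
Proof. by rewrite /L3 eqxx; case: ifP; rewrite ?rmorph0 ?rmorphN ?rmorph1. Qed.

Lemma mapply_Cmat_split k m :
  mapply N (Cmat k) u m = 'i * k%:~R * mapply N L1 u m - L3 m m * u m.
Proof.
rewrite -(@mapply_diag L3) => [|j]; last by rewrite /L3 eq_sym => /negbTE ->.
by rewrite /mapply mulr_sumr -sumrB; apply: eq_bigr => j _; rewrite /Cmat; ring.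
Qed.

Definition Crow (k : int) (m : nat) : C :=
  'i * k%:~R * L1row m - L3 m m * u m.

Lemma mapply_Cmat k m : mapply N (Cmat k) u m = Crow k m.
Proof. by rewrite mapply_Cmat_split mapply_L1. Qed.

Definition Pcorr (alpha beta : C) (k : int) (m : nat) : C :=
  match m with
  | 0%N => - 'i * alpha / k%:~R * u 1%N
  | 1%N => 'i * alpha / k%:~R * u 0%N
  | 2%N => - 'i * beta / (2 * k%:~R) * u 3%N
  | 3%N => 'i * beta / (2 * k%:~R) * u 2%N
  | _ => 0
  end.

Lemma mapply_Pmat alpha beta k m :
  mapply N (Pmat alpha beta k) u m = u m + Pcorr alpha beta k m.
Proof.
case: (ltnP m 4) => [lt_m4|le4m].
  rewrite (@mapply_band _ _ 4) => [|j le4j]; last first.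
    rewrite /Pmat !ifF //; apply/negbTE; lia.
  by case: m lt_m4 => [|[|[|[|m]]]] // _; rewrite !big_ord_recr big_ord0 /Pmat /=; ring.
case: m le4m => [|[|[|[|m]]]] // _; rewrite mapply_diag /Pmat /= ?eqxx ?mul1r ?addr0 //.
by move=> j /negbTE; rewrite eq_sym => ->.
Qed.

(* The diagonal part has no L_1 term: i k L_1 cancels in 2 Re <C_k u, u>. *)
Definition density (alpha beta mu : C) (k : int) (m : nat) : C :=
  let c := Crow k m in let a := Pcorr alpha beta k m in
  (- 2 * L3 m m - 2 * mu) * (u m * (u m)^*) + (c * a^* + a * c^* - 2 * mu * (u m * a^*)).

Lemma form_density alpha beta mu k M : (N <= M)%N ->
  inner M (mapply N (Cmat k) u) (mapply N (Pmat alpha beta k) u)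
  + inner M (mapply N (Pmat alpha beta k) u) (mapply N (Cmat k) u)
  - 2 * mu * inner M u (mapply N (Pmat alpha beta k) u) =
  \sum_(m < M) density alpha beta mu k m.
Proof.
move=> leNM; set Cu := mapply N (Cmat k) u; set Pu := mapply N (Pmat alpha beta k) u.
have wJ : ('i * k%:~R)^* = - ('i * k%:~R) :> C.
  rewrite rmorphM rmorph_int -mulNr; congr (_ * _).
  by apply/eqP; rewrite eq_complex /= oppr0 !eqxx.
rewrite (_ : inner M Cu Pu + inner M Pu Cu - 2 * mu * inner M u Pu =
  inner M Cu u + inner M u Cu + \sum_(m < M) (- 2 * mu * (u m * (u m)^*) +
    (Cu m * (Pcorr alpha beta k m)^* + Pcorr alpha beta k m * (Cu m)^* -
     2 * mu * (u m * (Pcorr alpha beta k m)^*)))); last first.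
  rewrite /inner mulr_sumr -big_split -sumrB -!big_split; apply: eq_bigr => m _ /=.
  by rewrite /Pu mapply_Pmat rmorphD; ring.
rewrite (inner_skew_hermitian wJ L1_hermitian L3_real leNM) => [|m]; last first.
  exact: mapply_Cmat_split.
rewrite -big_split; apply: eq_bigr => m _ /=.
by rewrite /density /Cu mapply_Cmat; ring.
Qed.

Lemma density_eq0 alpha beta mu k m : (N <= m)%N -> (4 <= m)%N ->
  density alpha beta mu k m = 0.
Proof.
case: m => [|[|[|[|m]]]] // leNm _.
by rewrite /density /= u_supp // rmorph0 !mulr0 !mul0r addr0 subr0 addr0.
Qed.

Lemma density_ge0_tail alpha beta (mu : R) k m : mu <= 1 -> (4 <= m)%N ->
  0 <= density alpha beta mu%:C k m.
Proof.
move=> mu_le1; case: m => [|[|[|[|m]]]] // _.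
rewrite /density /L3 eqxx /= rmorph0 !mulr0 mul0r ?subr0 !addr0.
apply: mulr_ge0; last exact: mulcJ_ge0.
rewrite mulrN1 opprK -(rmorph_nat (real_complex R) 2) -rmorphM -rmorphB ler0c; lra.
Qed.

End InfiniteMatrices.

Section HeadForm.
Variable R : rcfType.
Local Notation C := R[i].

Definition binform (a b : R) (z x y : C) : C :=
  a%:C * (x * x^*) + b%:C * (y * y^*) + z * (x * y^*) + z^* * (y * x^*).

Lemma binform_ge0 a b z x y : 0 < a -> z * z^* <= (a * b)%:C ->
  0 <= binform a b z x y.
Proof.
move=> a_gt0 zz_le.
have e : a%:C * binform a b z x y =
    (a%:C * x + z^* * y) * (a%:C * x + z^* * y)^* + ((a * b)%:C - z * z^*) * (y * y^*).
  by rewrite /binform !rmorphD !rmorphM /= ?conjcE conjcK conjc_real; ring.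
have : 0 <= a%:C * binform a b z x y.
  by rewrite e addr_ge0 ?mulcJ_ge0 // mulr_ge0 ?mulcJ_ge0 ?subr_ge0.
by rewrite pmulr_rge0 // ltcR.
Qed.

(* The binding constraint on mu is the remainder on |v_2|^2, which is
   sqrt 3 / 3 - 0.5344... - 2 mu, about 0.0429 - 2 mu. *)
Definition head_form (kr s2 s3 mu : R) (v : nat -> C) : C :=
  binform (1/9) 1 ('i * ((1 - 2 * mu) / kr / 3)%:C) (v 0%N) (v 1%N)
  + binform (1/2) (4/9) (s2 / 3)%:C (v 0%N) (v 2%N)
  + binform (1/4) (2/9) (- s2 / 6)%:C (v 1%N) (v 3%N)
  + binform (3/100) 1 ('i * ((1 - 2 * mu) / kr / 6)%:C) (v 2%N) (v 3%N)
  + binform (3/50) (19/10) (1/3)%:C (v 2%N) (v 4%N)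
  + (2/3 - 2 * mu - 1/9 - 1/2)%:C * (v 0%N * (v 0%N)^*)
  + (4/3 - 2 * mu - 1 - 1/4)%:C * (v 1%N * (v 1%N)^*)
  + (s3/3 - 2 * mu - 4/9 - 3/100 - 3/50)%:C * (v 2%N * (v 2%N)^*)
  + (2 - s3/3 - 2 * mu - 2/9 - 1)%:C * (v 3%N * (v 3%N)^*)
  + (2 - 2 * mu - 19/10)%:C * (v 4%N * (v 4%N)^*).

Lemma head_form_ge0 kr s2 s3 mu v : 1 <= kr ^+ 2 -> s2 ^+ 2 = 2 -> s3 ^+ 2 = 3 ->
  0 <= s3 -> 0 <= mu <= 206 / 10000 -> 0 <= head_form kr s2 s3 mu v.
Proof.
move=> kr2_ge1 s2E s3E s3_ge0 /andP[mu_ge0 mu_le].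
have s3_gt : 1727 / 1000 <= s3 by nra.
have s3_lt : s3 <= 2 by nra.
have t2_le : ((1 - 2 * mu) / kr) ^+ 2 <= 1.
  by rewrite expr_div_n ler_pdivrMr ?mul1r; nra.
have normJ (r : R) : r%:C * (r%:C)^* = (r ^+ 2)%:C :> C.
  by apply/eqP; rewrite eq_complex /=; apply/andP; split; apply/eqP; ring.
have normiJ (r : R) : 'i * r%:C * ('i * r%:C)^* = (r ^+ 2)%:C :> C.
  by apply/eqP; rewrite eq_complex /=; apply/andP; split; apply/eqP; ring.
have diag_ge0 (d : R) (x : C) : 0 <= d -> 0 <= d%:C * (x * x^*).
  by move=> d_ge0; rewrite mulr_ge0 ?mulcJ_ge0 ?ler0c.
rewrite /head_form; do 5 (apply: addr_ge0; last by apply: diag_ge0; lra).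
by do 4 (apply: addr_ge0; last by apply: binform_ge0; rewrite ?normiJ ?normJ ?lecR; lra);
  apply: binform_ge0; rewrite ?normiJ ?normJ ?lecR; lra.
Qed.

Lemma density_head (k : int) (mu : R) (u : nat -> C) : k != 0 ->
  \sum_(m < 5) density u (1/3)%:C (1/3)%:C mu%:C k m =
  head_form k%:~R (Num.sqrt 2) (Num.sqrt 3) mu u.
Proof.
move=> k_neq0.
have sqrt4 : Num.sqrt 4 = 2 :> R.
  by rewrite -[4]/(2 * 2)%:R natrM -expr2 sqrtr_sqr ger0_norm.
have iJ : Num.conj ('i : C) = - 'i by apply/eqP; rewrite eq_complex /= oppr0 !eqxx.
have iE : ('i : C) ^+ 2 = -1 by exact: sqr_i.
have realJ (r : R) : Num.conj (r%:C) = r%:C by rewrite conjcE conjc_real.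
rewrite !big_ord_recr big_ord0 /= /density /Crow /L1row /Pcorr /L3 /=.
rewrite sqrtr0 sqrtr1 sqrt4 /head_form /binform -(rmorph_int (real_complex R) k).
field: iE iJ (realJ k%:~R) (realJ (Num.sqrt 2)) (realJ (Num.sqrt 3)) (realJ mu).
by rewrite intr_eq0.
Qed.

End HeadForm.

Theorem lemma4 (R : rcfType) (k : int) (N : nat) (u : nat -> R[i]) :
  k != 0 ->
  (forall j, (N <= j)%N -> u j = 0) ->
  let alpha : R[i] := (1 / 3 : R)%:C in
  let beta : R[i] := (1 / 3 : R)%:C in
  let mu : R[i] := (206 / 10000 : R)%:C in
  let Cu := mapply N (Cmat k) u in
  let Pu := mapply N (Pmat alpha beta k) u in
  inner (N + 4) Cu Pu + inner (N + 4) Pu Cu >= 2 * mu * inner (N + 4) u Pu.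
Proof.
move=> k_neq0 u_supp /=.
rewrite -subr_ge0 form_density ?leq_addr //.
rewrite -(@sum_ord_widen0 _ (N + 4) (5 + N)); last 2 first.
- by rewrite addnC leq_add2l.
- by move=> j le_N4j; rewrite (density_eq0 u_supp) //; lia.
rewrite big_split_ord /=; apply: addr_ge0.
  have k2_ge1 : 1 <= (k%:~R : R) ^+ 2.
    by rewrite -rmorphXn /= ler1z expr2; lia.
  rewrite density_head // head_form_ge0 ?sqr_sqrtr ?sqrtr_ge0 ?lexx ?andbT //; lra.
by apply: sumr_ge0 => m _; apply: density_ge0_tail; [lra | lia].
Qed.
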